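(* Let $-\beta\in(0,1)$ and $c\in(0,1)$, and let $n\geq 2$ be an integer. Denote the zeros of the monic Meixner polynomial $M_n(x;\beta,c)$ by $z_{1,n}<z_{2,n}<\dots<z_{n,n}$ (they are real and distinct). Then $$z_{1,n}<0<1<z_{2,n}.$$
   Context: Monic Meixner polynomials are defined by $$M_n(x;\beta,c)=\left(\frac{c}{c-1}\right)^n(\beta)_n\sum_{k=0}^{n}\frac{(-n)_k(-x)_k(1-\frac1c)^k}{(\beta)_k\,k!},$$ for real $\beta,c$ with $c\neq 0$ and $\beta\notin\{-1,-2,\dots,-n+1\}$, where $(\alpha)_0=1$ and $(\alpha)_k=\alpha(\alpha+1)\cdots(\alpha+k-1)$ for $k\geq1$. For $-\beta,c\in(0,1)$ and $n\ge 2$, the zeros of $M_n(x;\beta,c)$ are known to be real and distinct. *)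

From mathcomp Require Import all_boot all_order all_algebra.
Set Implicit Arguments. Unset Strict Implicit. Unset Printing Implicit Defensive.
Import Order.TTheory GRing.Theory Num.Theory.
Local Open Scope ring_scope.

Definition poch {R : pzRingType} (a : R) (k : nat) : R :=
  \prod_(i < k) (a + i%:R).

(* Monic Meixner polynomial M_n(x; beta, c), as a function of x *)
Definition meixner {R : fieldType} (n : nat) (beta c x : R) : R :=
  (c / (c - 1)) ^+ n * poch beta n *
  \sum_(k < n.+1) (poch (- n%:R) k * poch (- x) k * (1 - c^-1) ^+ k)
                  / (poch beta k * k`!%:R).

From mathcomp Require Import all_boot all_order all_algebra.
From mathcomp Require Import ring lra.
From mathcomp.real_closed Require Import polyrcf.
Import Order.TTheory GRing.Theory Num.Theory.
Set Implicit Arguments. Unset Strict Implicit. Unset Printing Implicit Defensive.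
Local Open Scope ring_scope.

(* Expanding in the basis (-x)_k, where multiplication by x and the shift
   x -> x + 1 act by simple formulas, gives two identities for the monic
   Meixner polynomials: the three-term recurrence
     M_(n+2) = (x - b_(n+1)) M_(n+1) - a_(n+1) M_n
   and the contiguous relation
     M_n(y + 1; g) = M_n(y; g + 1) + n / (1 - c) M_(n-1)(y; g + 1).
   For g > 0 and 0 < c < 1 we have a_(n+1) > 0 and (-1)^n M_n(0; g) > 0, so the
   classical sign-counting induction shows that M_n(.; g) has n simple positive
   zeros s_i, at which M_(n-1)(.; g) alternates in sign.  For beta in (-1, 0),
   the contiguous relation with g = beta + 1 gives
   M_n(s_i + 1; beta) = n / (1 - c) M_(n-1)(s_i; g), so M_n(.; beta) alternates
   at the points s_i + 1 > 1 and has n - 1 zeros between them; since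
   (-1)^(n-1) M_n(0; beta) > 0, the remaining zero is negative. *)

Lemma poch0 (R : pzRingType) (a : R) : poch a 0 = 1.
Proof. by rewrite /poch big_ord0. Qed.

Lemma pochS (R : pzRingType) (a : R) k : poch a k.+1 = poch a k * (a + k%:R).
Proof. by rewrite /poch big_ord_recr. Qed.

Lemma poch1 (R : pzRingType) (a : R) : poch a 1 = a.
Proof. by rewrite pochS poch0 mul1r addr0. Qed.

Lemma pochSl (R : comPzRingType) (a : R) k : poch a k.+1 = a * poch (a + 1) k.
Proof.
rewrite /poch big_ord_recl /= addr0; congr (_ * _).
by apply: eq_bigr => i _; rewrite /bump /= add1n -addrA -nat1r.
Qed.

Lemma poch_oppSn (R : comPzRingType) m k :
  poch (- m.+1%:R : R) k.+1 = - m.+1%:R * poch (- m%:R) k.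
Proof. by rewrite pochSl -nat1r opprD addrAC addNr add0r. Qed.

Lemma poch_oppn_eq0 (R : pzRingType) (n k : nat) :
  (n < k)%N -> poch (- n%:R : R) k = 0.
Proof.
elim: k => // k IHk; rewrite ltnS leq_eqVlt pochS => /predU1P[->|/IHk->].
  by rewrite addNr mulr0.
by rewrite mul0r.
Qed.

Lemma poch_gt0 (R : numDomainType) (a : R) k : 0 < a -> 0 < poch a k.
Proof. by move=> a_gt0; apply: prodr_gt0 => i _; rewrite ltr_wpDr. Qed.

Lemma poch_neq0 (R : idomainType) (a : R) k :
  (forall j : nat, a + j%:R != 0) -> poch a k != 0.
Proof. by move=> a_nonint; apply/prodf_neq0 => i _. Qed.

Section PochhammerSeries.
Variable R : comPzRingType.

Definition pochsum (N : nat) (a : nat -> R) (x : R) : R :=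
  \sum_(k < N) a k * poch (- x) k.

Lemma eq_pochsum N (a b : nat -> R) x :
  (forall k, (k < N)%N -> a k = b k) -> pochsum N a x = pochsum N b x.
Proof. by move=> eq_ab; apply: eq_bigr => i _; rewrite eq_ab. Qed.

Lemma pochsumD N (a b : nat -> R) x :
  pochsum N a x + pochsum N b x = pochsum N (fun k => a k + b k) x.
Proof. by rewrite /pochsum -big_split; apply: eq_bigr => i _; rewrite mulrDl. Qed.

Lemma pochsumB N (a b : nat -> R) x :
  pochsum N a x - pochsum N b x = pochsum N (fun k => a k - b k) x.
Proof. by rewrite /pochsum -sumrB; apply: eq_bigr => i _; rewrite mulrBl. Qed.

Lemma pochsumZ N (a : nat -> R) r x :
  r * pochsum N a x = pochsum N (fun k => r * a k) x.
Proof. by rewrite /pochsum mulr_sumr; apply: eq_bigr => i _; rewrite mulrA. Qed.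

Lemma pochsum_widen N d (a : nat -> R) x :
  (forall k, (N <= k)%N -> a k = 0) -> pochsum (N + d) a x = pochsum N a x.
Proof.
move=> a_eq0; elim: d => [|d IHd]; first by rewrite addn0.
by rewrite addnS /pochsum big_ord_recr /= a_eq0 ?leq_addr // mul0r addr0.
Qed.

(* [x (-x)_k = k (-x)_k - (-x)_(k+1)] *)
Lemma pochsum_mulX M (a : nat -> R) x : a M = 0 ->
  x * pochsum M.+1 a x =
  pochsum M.+1 (fun k => k%:R * a k - (if k is j.+1 then a j else 0)) x.
Proof.
move=> aM; rewrite -pochsumB /pochsum mulr_sumr.
have -> : \sum_(k < M.+1) (if nat_of_ord k is j.+1 then a j else 0) * poch (- x) k =
          \sum_(k < M.+1) a k * poch (- x) k.+1.
  by rewrite big_ord_recl big_ord_recr /= aM !mul0r add0r addr0.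
by rewrite -sumrB; apply: eq_bigr => i _; rewrite pochS; ring.
Qed.

(* [(-(y+1))_k = (-y)_k - k (-y)_(k-1)] *)
Lemma pochsum_shift M (a : nat -> R) y : a M.+1 = 0 ->
  pochsum M.+1 a (y + 1) = pochsum M.+1 (fun k => a k - k.+1%:R * a k.+1) y.
Proof.
move=> aM; rewrite -pochsumB /pochsum.
have shift k : poch (- (y + 1)) k = poch (- y) k - k%:R * poch (- y) k.-1.
  by case: k => [|k]; rewrite ?poch0 ?mul0r ?subr0 // pochSl pochS opprD addrNK; ring.
under eq_bigr do rewrite shift.
have -> : \sum_(k < M.+1) k.+1%:R * a k.+1 * poch (- y) k =
          \sum_(k < M.+1) a k * (k%:R * poch (- y) k.-1).
  rewrite [RHS]big_ord_recl [LHS]big_ord_recr /= aM !(mul0r, mulr0) addr0 add0r.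
  by apply: eq_bigr => i _; rewrite /bump /=; ring.
by rewrite -sumrB; apply: eq_bigr => i _; rewrite mulrBr.
Qed.

End PochhammerSeries.

Section MeixnerSeries.
Variable R : numFieldType.
Implicit Types (g c z x : R) (m n k : nat).

Definition meixner_coef g z m k : R :=
  poch (- m%:R) k * z ^+ k / (poch g k * k`!%:R).

Lemma meixnerE n g c x :
  meixner n g c x =
  (c / (c - 1)) ^+ n * poch g n * pochsum n.+1 (meixner_coef g (1 - c^-1) n) x.
Proof.
rewrite /meixner /pochsum; congr (_ * _).
by apply: eq_bigr => i _; rewrite /meixner_coef; ring.
Qed.

Lemma meixner_coef_eq0 g z m k : (m < k)%N -> meixner_coef g z m k = 0.
Proof. by move=> lt_mk; rewrite /meixner_coef poch_oppn_eq0 // !mul0r. Qed.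

Lemma meixner_pochsum_widen g z n d x :
  pochsum (n.+1 + d) (meixner_coef g z n) x = pochsum n.+1 (meixner_coef g z n) x.
Proof. by apply: pochsum_widen => k; apply: meixner_coef_eq0. Qed.

Definition meixner_b g c m : R := (m%:R + (m%:R + g) * c) / (1 - c).
Definition meixner_a g c m : R := m%:R * (m.-1%:R + g) * c / (1 - c) ^+ 2.

Lemma meixner0 g c x : meixner 0 g c x = 1.
Proof.
by rewrite meixnerE /pochsum big_ord1 /meixner_coef !poch0 fact0 !mul1r !mulr1 invr1.
Qed.

Lemma meixner_at0 n g c : meixner n g c 0 = (c / (c - 1)) ^+ n * poch g n.
Proof.
rewrite meixnerE /pochsum big_ord_recl big1 ?addr0 => [|i _].
  by rewrite /meixner_coef !poch0 fact0 !mul1r invr1 !mulr1.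
by rewrite oppr0 /= pochSl mul0r mulr0.
Qed.

Variables g c : R.
Hypotheses (g_nonint : forall j : nat, g + j%:R != 0) (c_neq0 : c != 0) (c_neq1 : c != 1).

Let g_neq0 : g != 0.
Proof. by have := g_nonint 0; rewrite addr0. Qed.

Let gS_nonint j : g + 1 + j%:R != 0.
Proof. by rewrite -addrA nat1r. Qed.

Let c_sub1_neq0 : c - 1 != 0.
Proof. by rewrite subr_eq0. Qed.

Let one_subc_neq0 : 1 - c != 0.
Proof. by rewrite subr_eq0 eq_sym. Qed.

Lemma meixner_coef_rec n k :
  (c - 1) * (k%:R * meixner_coef g (1 - c^-1) n.+1 k -
     (if k is j.+1 then meixner_coef g (1 - c^-1) n.+1 j else 0)) =
  c * (n.+1%:R + g) * meixner_coef g (1 - c^-1) n.+2 k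
  - (n.+1%:R + (n.+1%:R + g) * c) * meixner_coef g (1 - c^-1) n.+1 k
  + n.+1%:R * meixner_coef g (1 - c^-1) n k.
Proof.
rewrite /meixner_coef.
case: k => [|[|j]] /=.
- by rewrite !poch0 fact0; field.
- by rewrite !poch1 !poch0 fact0 -!natr1; field; rewrite g_neq0 c_neq0.
rewrite !poch_oppSn !pochS !factS !natrM !exprS -!natr1.
have fj : (j`!%:R : R) != 0 by rewrite pnatr_eq0 -lt0n fact_gt0.
have := poch_neq0 j g_nonint.
move: (poch (- n%:R) j) (poch g j) ((1 - c^-1) ^+ j) => P G Z G0.
by field; rewrite fj G0 c_neq0 !natr1 !g_nonint !pnatr_eq0.
Qed.

Lemma meixner_coef_contig n k :
  meixner_coef g (1 - c^-1) n.+1 k - k.+1%:R * meixner_coef g (1 - c^-1) n.+1 k.+1 =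
  g^-1 * ((g + n.+1%:R) * meixner_coef (g + 1) (1 - c^-1) n.+1 k
          - c^-1 * n.+1%:R * meixner_coef (g + 1) (1 - c^-1) n k).
Proof.
rewrite /meixner_coef.
case: k => [|j].
- rewrite !poch0 !poch1 fact0 factS fact0 -!natr1.
  by field; rewrite g_neq0 c_neq0.
rewrite !poch_oppSn !(pochSl g) !pochS !factS !natrM !exprS -!natr1.
have fj : (j`!%:R : R) != 0 by rewrite pnatr_eq0 -lt0n fact_gt0.
have := poch_neq0 j gS_nonint.
move: (poch (- n%:R) j) (poch (g + 1) j) ((1 - c^-1) ^+ j) => P G Z G0.
by field; rewrite fj G0 c_neq0 g_neq0 gS_nonint !natr1 !pnatr_eq0.
Qed.

Lemma meixner1 x : meixner 1 g c x = x - meixner_b g c 0.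
Proof.
rewrite meixnerE /pochsum !big_ord_recr big_ord0 /meixner_coef /meixner_b /=.
rewrite !poch0 !poch1 factS fact0 add0r; field.
by rewrite one_subc_neq0 c_sub1_neq0 c_neq0 g_neq0.
Qed.

Lemma meixner_rec n x :
  meixner n.+2 g c x =
  (x - meixner_b g c n.+1) * meixner n.+1 g c x - meixner_a g c n.+1 * meixner n g c x.
Proof.
set z := 1 - c^-1; rewrite !meixnerE -/z.
rewrite -[pochsum n.+2 _ x](meixner_pochsum_widen _ _ _ 1) addn1.
rewrite -[pochsum n.+1 _ x](meixner_pochsum_widen _ _ _ 2) addn2.
have rec : (c - 1) * (x * pochsum n.+3 (meixner_coef g z n.+1) x) =
   c * (n.+1%:R + g) * pochsum n.+3 (meixner_coef g z n.+2) x
   - (n.+1%:R + (n.+1%:R + g) * c) * pochsum n.+3 (meixner_coef g z n.+1) x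
   + n.+1%:R * pochsum n.+3 (meixner_coef g z n) x.
  rewrite pochsum_mulX ?meixner_coef_eq0 // !pochsumZ pochsumB pochsumD.
  by apply: eq_pochsum => k _; apply: meixner_coef_rec.
have -> : pochsum n.+3 (meixner_coef g z n.+2) x =
   ((c - 1) * (x * pochsum n.+3 (meixner_coef g z n.+1) x)
    + (n.+1%:R + (n.+1%:R + g) * c) * pochsum n.+3 (meixner_coef g z n.+1) x
    - n.+1%:R * pochsum n.+3 (meixner_coef g z n) x) / (c * (n.+1%:R + g)).
  by rewrite rec; field; rewrite c_neq0 nat1r addrC g_nonint.
rewrite /meixner_b /meixner_a !pochS !exprS /=.
by field; rewrite c_sub1_neq0 one_subc_neq0 c_neq0 nat1r addrC g_nonint.
Qed.

Lemma meixner_contig n y :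
  meixner n.+1 g c (y + 1) =
  meixner n.+1 (g + 1) c y + n.+1%:R / (1 - c) * meixner n (g + 1) c y.
Proof.
set z := 1 - c^-1; rewrite !meixnerE -/z.
rewrite -[pochsum n.+1 _ y](meixner_pochsum_widen _ _ _ 1) addn1.
have contig : pochsum n.+2 (meixner_coef g z n.+1) (y + 1) =
   g^-1 * ((g + n.+1%:R) * pochsum n.+2 (meixner_coef (g + 1) z n.+1) y
           - c^-1 * n.+1%:R * pochsum n.+2 (meixner_coef (g + 1) z n) y).
  rewrite pochsum_shift ?meixner_coef_eq0 // !pochsumZ pochsumB pochsumZ.
  by apply: eq_pochsum => k _; rewrite meixner_coef_contig.
rewrite contig (pochSl g) pochS !exprS.
by field; rewrite one_subc_neq0 c_sub1_neq0 c_neq0 g_neq0.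
Qed.

End MeixnerSeries.

Lemma monic_XsubC_mul_sub (R : nzRingType) (p q : {poly R}) b a :
  q \is monic -> (size p < size q)%N ->
  ('X - b%:P) * q - a%:P * p \is monic /\ size (('X - b%:P) * q - a%:P * p) = (size q).+1.
Proof.
move=> q_monic lt_pq.
have size_Xq : size (('X - b%:P) * q) = (size q).+1.
  by rewrite size_monicM ?monicXsubC ?monic_neq0 // size_XsubC.
have lt_ap : (size (- (a%:P * p))%R < size (('X - b%:P) * q)%R)%N.
  rewrite size_polyN mul_polyC size_Xq ltnS.
  exact: leq_trans (size_scale_leq _ _) (ltnW lt_pq).
split; last by rewrite size_polyDl // size_Xq.
rewrite monicE lead_coefDl // lead_coef_monicM ?monicXsubC //; exact: q_monic.
Qed.

Section MeixnerPoly.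
Variable R : numFieldType.
Implicit Types (g c x : R) (n : nat).

(* Computes the pair (P_n, P_(n+1)), so that the two-step recurrence is a
   structural one. *)
Fixpoint meixner_polys g c n : {poly R} * {poly R} :=
  if n is m.+1 then
    let pq := meixner_polys g c m in
    (pq.2, ('X - (meixner_b g c m.+1)%:P) * pq.2 - (meixner_a g c m.+1)%:P * pq.1)
  else (1, 'X - (meixner_b g c 0)%:P).

Definition meixner_poly g c n : {poly R} := (meixner_polys g c n).1.

Lemma meixner_polySS g c n :
  meixner_poly g c n.+2 =
  ('X - (meixner_b g c n.+1)%:P) * meixner_poly g c n.+1
  - (meixner_a g c n.+1)%:P * meixner_poly g c n.
Proof. by []. Qed.

Lemma meixner_poly_monic_size g c n :
  meixner_poly g c n \is monic /\ size (meixner_poly g c n) = n.+1.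
Proof.
elim/ltn_ind: n => -[_|[_|n IHn]]; first by rewrite monic1 size_poly1.
  by rewrite monicXsubC size_XsubC.
have [[_ size0] [mon1 size1]] := (IHn n (ltnW (ltnSn _)), IHn n.+1 (ltnSn _)).
have := monic_XsubC_mul_sub (p := meixner_poly g c n) (meixner_b g c n.+1)
                              (meixner_a g c n.+1) mon1.
by rewrite meixner_polySS size0 size1 => /(_ (ltnSn _)).
Qed.

Lemma horner_meixner_poly g c n x :
  (forall j : nat, g + j%:R != 0) -> c != 0 -> c != 1 ->
  (meixner_poly g c n).[x] = meixner n g c x.
Proof.
move=> g_nonint c_neq0 c_neq1.
elim/ltn_ind: n => -[_|[_|n IHn]]; first by rewrite hornerC meixner0.
  by rewrite hornerXsubC meixner1.
rewrite meixner_polySS meixner_rec // hornerD hornerN !hornerM hornerXsubC !hornerC.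
by rewrite !IHn // ltnW.
Qed.
End MeixnerPoly.

Lemma prod_sub_eq0 (R : idomainType) n (z : nat -> R) x :
  \prod_(i < n) (x - z i) = 0 <-> exists2 i, (i < n)%N & x = z i.
Proof.
split=> [/eqP/prodf_eq0[i _]|[i lt_in ->]].
  by rewrite subr_eq0 => /eqP->; exists i.
by apply/eqP/prodf_eq0; exists (Ordinal lt_in); rewrite //= subrr.
Qed.

Lemma horner_prod_XsubC (R : comNzRingType) n (z : nat -> R) x :
  (\prod_(i < n) ('X - (z i)%:P)).[x] = \prod_(i < n) (x - z i).
Proof. by rewrite horner_prod; apply: eq_bigr => i _; rewrite hornerXsubC. Qed.

Lemma sign_prod_sub (R : realDomainType) n m (s : nat -> R) x :
  (forall i, (i < m)%N -> (i < n)%N -> s i < x) ->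
  (forall i, (m <= i < n)%N -> x < s i) ->
  0 < (-1) ^+ (n - m) * \prod_(i < n) (x - s i).
Proof.
elim: n => [|n IHn] lt_sx lt_xs; first by rewrite big_ord0 mulr1.
rewrite big_ord_recr /=.
have IH : 0 < (-1) ^+ (n - m) * \prod_(i < n) (x - s i).
  apply: IHn => [i lt_im lt_in|i /andP[le_mi lt_in]]; first exact: lt_sx (ltnW lt_in).
  by apply: lt_xs; rewrite le_mi ltnW.
move: IH; case: (leqP m n) => [le_mn|lt_nm].
  have := lt_xs n; rewrite le_mn ltnSn subSn // exprS => /(_ isT).
  move: ((-1) ^+ (n - m)) (\prod_(i < n) (x - s i)) => A P lt_xsn AP_gt0; nra.
have lt_sxn := lt_sx n lt_nm (ltnSn n).
move: (lt_nm) (ltnW lt_nm); rewrite -!subn_eq0 => /eqP-> /eqP->.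
by rewrite !mul1r => P_gt0; rewrite mulr_gt0 // subr_gt0.
Qed.

Lemma XsubC_prod_root_gt (R : realDomainType) n (t : nat -> R) w x :
  (forall i, (i < n)%N -> t i < x) ->
  (('X - w%:P) * \prod_(i < n) ('X - (t i)%:P)).[x] < 0 -> x < w.
Proof.
move=> lt_tx; rewrite hornerM hornerXsubC horner_prod_XsubC pmulr_llt0 ?subr_lt0 //.
have := @sign_prod_sub _ n n t x; rewrite subnn expr0 mul1r; apply=> [i _ /lt_tx //|i].
by move=> /andP[le_ni /(leq_ltn_trans le_ni)]; rewrite ltnn.
Qed.

Lemma XsubC_prod_root_lt (R : realDomainType) n (t : nat -> R) w x :
  (forall i, (i < n)%N -> x < t i) ->
  0 < (-1) ^+ n * (('X - w%:P) * \prod_(i < n) ('X - (t i)%:P)).[x] -> w < x.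
Proof.
move=> lt_xt; rewrite hornerM hornerXsubC horner_prod_XsubC mulrCA pmulr_lgt0 ?subr_gt0 //.
by rewrite -[n in (-1) ^+ n]subn0; apply: sign_prod_sub => // i /andP[_ /lt_xt].
Qed.

Section IncreasingSteps.
Variables (R : realDomainType) (n : nat) (u : nat -> R).
Hypothesis u_step : forall m, (m < n)%N -> u m < u m.+1.

Let below_convex : {in [pred k | k <= n] &, forall i j k, i < k < j -> k <= n}%N.
Proof. by move=> i j _ /= le_jn k /andP[_ /ltnW/leq_trans]; apply. Qed.

Lemma le_of_lt_steps i j : (i <= j <= n)%N -> u i <= u j.
Proof.
move=> /andP[le_ij le_jn]; apply: (homo_leq_in lexx le_trans below_convex) => //.
- by move=> k _ /= lt_kn; apply/ltW/u_step.
- exact: leq_trans le_ij le_jn.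
Qed.

Lemma sign_prod_sub_interlaced (r : nat -> R) :
  (forall i, (i <= n)%N -> u i < r i) -> (forall i, (i < n)%N -> r i < u i.+1) ->
  forall i, (i <= n)%N -> 0 < (-1) ^+ (n - i) * \prod_(j < n) (r i - u j.+1).
Proof.
move=> ur ru i le_in.
apply: (sign_prod_sub (s := fun j => u j.+1)) => [j lt_ji _|j /andP[le_ij lt_jn]].
  by apply: le_lt_trans (ur i le_in); apply: le_of_lt_steps; rewrite lt_ji.
apply: lt_le_trans (ru i (leq_ltn_trans le_ij lt_jn)) _.
by apply: le_of_lt_steps; rewrite ltnS le_ij.
Qed.

Lemma interlaced_lt (r : nat -> R) N : (N <= n.+1)%N ->
  (forall m, (m < N)%N -> u m < r m) -> (forall m, (m.+1 < N)%N -> r m < u m.+1) ->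
  forall i j, (i < j < N)%N -> r i < r j.
Proof.
move=> le_Nn ur ru i j /andP[lt_ij lt_jN].
apply: lt_le_trans (ru i (leq_ltn_trans lt_ij lt_jN)) _.
apply: le_trans (ltW (ur j lt_jN)); apply: le_of_lt_steps.
by rewrite lt_ij -ltnS (leq_trans lt_jN).
Qed.

End IncreasingSteps.

Lemma alternating_signs_mul_lt0 (R : realDomainType) k n (a : nat -> R) :
  (n <= k)%N -> (forall m, (m <= n)%N -> 0 < (-1) ^+ (k - m) * a m) ->
  forall m, (m < n)%N -> a m * a m.+1 < 0.
Proof.
move=> le_nk a_sign m lt_mn.
have := a_sign m (ltnW lt_mn); have := a_sign m.+1 lt_mn.
have -> : (k - m = (k - m.+1).+1)%N by rewrite subnSK // (leq_trans lt_mn).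
rewrite exprS -signr_odd.
by case: (odd _); rewrite ?expr0 ?expr1 ?mulN1r ?mul1r => ? ?; nra.
Qed.

Lemma monic_size2 (R : nzRingType) (q : {poly R}) :
  q \is monic -> size q = 2 -> q = 'X - (- q`_0)%:P.
Proof.
move=> /monicP q_lead q_size; apply/polyP => -[|[|i]]; rewrite coefB coefX coefC /=.
- by rewrite sub0r opprK.
- by rewrite subr0 -q_lead lead_coefE q_size.
- by rewrite subr0 nth_default // q_size.
Qed.

Lemma monic_factor_roots (R : fieldType) (p : {poly R}) n (r : nat -> R) :
  p \is monic -> size p = n.+2 ->
  (forall i j, (i < n)%N -> (j < n)%N -> r i = r j -> i = j) ->
  (forall i, (i < n)%N -> root p (r i)) ->
  exists w, p = ('X - w%:P) * \prod_(i < n) ('X - (r i)%:P).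
Proof.
move=> p_monic p_size r_inj p_r.
pose rs := [seq r i | i <- iota 0 n].
have prod_rs : \prod_(z <- rs) ('X - z%:P) = \prod_(i < n) ('X - (r i)%:P).
  by rewrite big_map -(big_mkord xpredT (fun i => 'X - (r i)%:P)) /index_iota subn0.
have rs_root : all (root p) rs.
  by apply/allP => z /mapP[i]; rewrite mem_iota add0n => /andP[_ lt_in] ->; apply: p_r.
have rs_uniq : uniq rs.
  rewrite map_inj_in_uniq ?iota_uniq // => i j.
  by rewrite !mem_iota !add0n => /andP[_ ?] /andP[_ ?]; apply: r_inj.
have [q p_eq] : exists q, p = q * \prod_(z <- rs) ('X - z%:P).
  by apply: uniq_roots_prod_XsubC rs_root _; rewrite uniq_rootsE.
have prod_monic : \prod_(z <- rs) ('X - z%:P) \is monic by apply: monic_prod_XsubC.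
have q_monic : q \is monic by rewrite -(monicMr q prod_monic) -p_eq.
have q_size : size q = 2.
  move: p_size; rewrite p_eq size_Mmonic ?monic_neq0 // size_prod_XsubC size_map size_iota.
  by rewrite addnS /= -add2n => /addIn.
by exists (- q`_0); rewrite p_eq -prod_rs -monic_size2.
Qed.

Lemma poly_ivt_steps (R : rcfType) (p : {poly R}) n (u : nat -> R) :
  (forall m, (m < n)%N -> u m < u m.+1) ->
  (forall m, (m < n)%N -> p.[u m] * p.[u m.+1] < 0) ->
  exists t : nat -> R, forall m, (m < n)%N -> u m < t m < u m.+1 /\ root p (t m).
Proof.
elim: n => [|n IHn] u_step p_sign; first by exists (fun _ => 0).
have [t t_root] := IHn (fun m lt_mn => u_step m (ltnW lt_mn))
                        (fun m lt_mn => p_sign m (ltnW lt_mn)).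
have [x x_in x_root] := poly_ivtoo (ltW (u_step n (ltnSn n))) (p_sign n (ltnSn n)).
exists (fun m => if m == n then x else t m) => m; rewrite ltnS leq_eqVlt.
by case: eqP => [-> _|_ /= lt_mn]; [rewrite in_itv /= in x_in | apply: t_root].
Qed.

Lemma monic_roots_between (R : rcfType) (p : {poly R}) n (u : nat -> R) :
  p \is monic -> size p = n.+2 ->
  (forall m, (m < n)%N -> u m < u m.+1) ->
  (forall m, (m < n)%N -> p.[u m] * p.[u m.+1] < 0) ->
  exists w (t : nat -> R), (forall m, (m < n)%N -> u m < t m < u m.+1) /\
    p = ('X - w%:P) * \prod_(i < n) ('X - (t i)%:P).
Proof.
move=> p_monic p_size u_step p_sign.
have [t t_root] := poly_ivt_steps u_step p_sign.
have ut m : (m < n)%N -> u m < t m < u m.+1 by move=> /t_root[].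
have t_lt := interlaced_lt u_step (leqnSn n) (fun m lt_mn => (andP (ut m lt_mn)).1)
  (fun m lt_mn => (andP (ut m (ltnW lt_mn))).2).
have t_inj i j : (i < n)%N -> (j < n)%N -> t i = t j -> i = j.
  move=> lt_in lt_jn t_eq.
  case: (ltngtP i j) => // [lt_ij|lt_ji].
  - by have := t_lt i j; rewrite lt_ij lt_jn t_eq ltxx => /(_ isT).
  - by have := t_lt j i; rewrite lt_ji lt_in t_eq ltxx => /(_ isT).
have [w p_eq] := monic_factor_roots p_monic p_size t_inj (fun m lt_mn => (t_root m lt_mn).2).
by exists w, t.
Qed.

Section PositiveParameter.
Variable R : rcfType.
Variables g c : R.
Hypotheses (g_gt0 : 0 < g) (c_gt0 : 0 < c) (c_lt1 : c < 1).

Local Notation P := (meixner_poly g c).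

Lemma nonint_of_gt0 j : g + j%:R != 0.
Proof. by rewrite gt_eqF // ltr_wpDr. Qed.

Lemma horner_meixner_poly_gt0 n x : (P n).[x] = meixner n g c x.
Proof. by apply: horner_meixner_poly; [exact: nonint_of_gt0 | rewrite gt_eqF | rewrite lt_eqF]. Qed.

Lemma meixner_poly_sign0 n : 0 < (-1) ^+ n * (P n).[0].
Proof.
rewrite horner_meixner_poly_gt0 meixner_at0 mulrA -exprMn.
have -> : -1 * (c / (c - 1)) = c / (1 - c) by rewrite mulN1r -mulrN -invrN opprB.
by rewrite mulr_gt0 ?exprn_gt0 ?poch_gt0 ?divr_gt0 ?subr_gt0.
Qed.

Lemma meixner_a_gt0 n : 0 < meixner_a g c n.+1.
Proof.
by rewrite /meixner_a !mulr_gt0 ?invr_gt0 ?exprn_gt0 ?subr_gt0 ?ltr0Sn ?ltr_wpDl.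
Qed.

Definition interlacing_zeros n : Prop :=
  exists s : nat -> R,
    [/\ forall i j, (i < j < n)%N -> s i < s j,
        forall i, (i < n)%N -> 0 < s i,
        P n = \prod_(i < n) ('X - (s i)%:P) &
        forall i, (i < n)%N -> 0 < (-1) ^+ (n - i.+1) * (P n.-1).[s i]].

Lemma meixner_poly_sign_at_zeros n (s : nat -> R) :
  P n = \prod_(i < n) ('X - (s i)%:P) ->
  (forall i, (i < n)%N -> 0 < (-1) ^+ (n - i.+1) * (P n.-1).[s i]) ->
  forall i, (i < n)%N -> 0 < (-1) ^+ (n - i) * (P n.+1).[s i].
Proof.
case: n => [//|n] Pn_eq Pn1_sign i lt_in.
have Pn_root : (P n.+1).[s i] = 0.
  by rewrite Pn_eq horner_prod_XsubC; apply/prod_sub_eq0; exists i.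
rewrite meixner_polySS hornerD hornerN !hornerM Pn_root mulr0 add0r hornerC.
rewrite subSn // exprS mulN1r mulNr mulrN opprK mulrCA.
by apply: mulr_gt0; [apply: meixner_a_gt0 | apply: Pn1_sign].
Qed.

Lemma interlacing_zerosS n : interlacing_zeros n -> interlacing_zeros n.+1.
Proof.
move=> [s [s_lt s_gt0 Pn_eq Pn1_sign]].
pose u m := if m is j.+1 then s j else 0.
have u_step m : (m < n)%N -> u m < u m.+1.
  by case: m => [|m] lt_mn /=; [apply: s_gt0 | apply: s_lt; rewrite ltnSn].
have u_ge0 m : (m <= n)%N -> 0 <= u m.
  by case: m => [|m] //= lt_mn; apply/ltW/s_gt0.
have u_sign m : (m <= n)%N -> 0 < (-1) ^+ (n.+1 - m) * (P n.+1).[u m].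
  case: m => [_|m lt_mn]; first exact: meixner_poly_sign0.
  by rewrite subSS; apply: meixner_poly_sign_at_zeros.
have [Pn1_monic Pn1_size] := meixner_poly_monic_size g c n.+1.
have [w [t [ut Pn1_eq]]] := monic_roots_between Pn1_monic Pn1_size u_step
   (alternating_signs_mul_lt0 (leqnSn n) u_sign).
have lt_un_w : u n < w.
  apply: XsubC_prod_root_gt (_ : forall i, _ -> t i < u n) _.
    move=> i lt_in; have /andP[_ /lt_le_trans] := ut i lt_in; apply.
    by apply: (le_of_lt_steps u_step); rewrite lt_in leqnn.
  by have := u_sign n (leqnn n); rewrite subSnn expr1 mulN1r oppr_gt0 Pn1_eq.
pose r i := if (i < n)%N then t i else w.
have ur i : (i <= n)%N -> u i < r i.
  rewrite /r leq_eqVlt => /predU1P[->|lt_in]; first by rewrite ltnn.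
  by rewrite lt_in; have /andP[] := ut i lt_in.
have ru i : (i < n)%N -> r i < u i.+1.
  by move=> lt_in; rewrite /r lt_in; have /andP[] := ut i lt_in.
exists r; split.
- by apply: (interlaced_lt u_step (leqnn n.+1)) => [m /ur | m /ru].
- by move=> i lt_in; apply: le_lt_trans (u_ge0 i lt_in) (ur i lt_in).
- rewrite Pn1_eq big_ord_recr /= /r ltnn mulrC; congr (_ * _).
  by apply: eq_bigr => i _; rewrite ltn_ord.
- move=> i lt_in; rewrite /= Pn_eq horner_prod_XsubC subSS.
  exact: (sign_prod_sub_interlaced u_step ur ru).
Qed.

Lemma interlacing_zeros_all n : interlacing_zeros n.
Proof.
elim: n => [|n]; last exact: interlacing_zerosS.
by exists (fun=> 0); split=> // [i j|]; rewrite ?ltn0 ?andbF // big_ord0.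
Qed.

End PositiveParameter.

Section NegativeParameter.
Variable R : rcfType.
Variables b c : R.
Hypotheses (b_gtN1 : -1 < b) (b_lt0 : b < 0) (c_gt0 : 0 < c) (c_lt1 : c < 1).

Let g_gt0 : 0 < b + 1.
Proof. by rewrite -ltrBlDr sub0r. Qed.

Let b_nonint j : b + j%:R != 0.
Proof.
case: j => [|j]; first by rewrite addr0 lt_eqF.
by rewrite -nat1r addrA nonint_of_gt0.
Qed.

Let c_neq0 : c != 0. Proof. by rewrite gt_eqF. Qed.
Let c_neq1 : c != 1. Proof. by rewrite lt_eqF. Qed.
Let c_sub1_neq0 : c - 1 != 0. Proof. by rewrite subr_eq0. Qed.
Let one_subc_neq0 : 1 - c != 0. Proof. by rewrite subr_eq0 eq_sym. Qed.

Lemma horner_meixner_poly_neg n x : (meixner_poly b c n).[x] = meixner n b c x.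
Proof. exact: horner_meixner_poly b_nonint c_neq0 c_neq1. Qed.

Lemma meixner_neg_sign0 n : 0 < (-1) ^+ n * meixner n.+1 b c 0.
Proof.
have -> : (-1) ^+ n * meixner n.+1 b c 0 =
          (-1 * (c / (c - 1))) ^+ n * (c / (c - 1) * b) * poch (b + 1) n.
  by rewrite meixner_at0 pochSl exprS [in X in _ = X]exprMn; ring.
have -> : -1 * (c / (c - 1)) = c / (1 - c) by field; rewrite ?c_sub1_neq0 ?one_subc_neq0.
have -> : c / (c - 1) * b = c * - b / (1 - c).
  by field; rewrite ?c_sub1_neq0 ?one_subc_neq0.
by rewrite !mulr_gt0 ?exprn_gt0 ?poch_gt0 ?divr_gt0 ?invr_gt0 ?subr_gt0 ?oppr_gt0.
Qed.

Lemma meixner_poly_neg_factor n :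
  exists w (t : nat -> R),
    [/\ w < 0, forall i, (i < n)%N -> 1 < t i,
        forall i j, (i < j < n)%N -> t i < t j &
        meixner_poly b c n.+1 = ('X - w%:P) * \prod_(i < n) ('X - (t i)%:P)].
Proof.
have [s [s_lt s_gt0 Pg_eq Pg_sign]] := interlacing_zeros_all g_gt0 c_gt0 c_lt1 n.+1.
pose v i := s i + 1.
have v_step i : (i < n)%N -> v i < v i.+1.
  by move=> lt_in; rewrite ltrD2r s_lt // ltnSn.
have v_sign i : (i <= n)%N -> 0 < (-1) ^+ (n - i) * (meixner_poly b c n.+1).[v i].
  move=> le_in; have Pg_root : meixner n.+1 (b + 1) c (s i) = 0.
    rewrite -(horner_meixner_poly_gt0 g_gt0 c_gt0 c_lt1) Pg_eq horner_prod_XsubC.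
    by apply/prod_sub_eq0; exists i.
  rewrite horner_meixner_poly_neg (meixner_contig b_nonint c_neq0 c_neq1) Pg_root add0r.
  rewrite -(horner_meixner_poly_gt0 g_gt0 c_gt0 c_lt1) mulrCA mulr_gt0 ?divr_gt0 ?subr_gt0 //.
  by have := Pg_sign i le_in; rewrite subSS.
have [P_monic P_size] := meixner_poly_monic_size b c n.+1.
have [w [t [vt P_eq]]] := monic_roots_between P_monic P_size v_step
  (alternating_signs_mul_lt0 (leqnn n) v_sign).
have t_gt1 i : (i < n)%N -> 1 < t i.
  move=> lt_in; have /andP[+ _] := vt i lt_in; apply: le_lt_trans.
  by rewrite lerDr ltW ?s_gt0 // ltnW.
exists w, t; split=> //.
- apply: XsubC_prod_root_lt (fun i lt_in => lt_trans ltr01 (t_gt1 i lt_in)) _.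
  by rewrite -P_eq horner_meixner_poly_neg meixner_neg_sign0.
- by apply: (interlaced_lt v_step (leqnSn n)) => [m /vt/andP[] | m /ltnW/vt/andP[]].
Qed.

End NegativeParameter.

Theorem proposition3p1 (R : rcfType) (beta c : R) (n : nat) :
  0 < - beta < 1 -> 0 < c < 1 -> (2 <= n)%N ->
  exists z : nat -> R,
    (forall i j, (i < j < n)%N -> z i < z j) /\
    (forall x : R, meixner n beta c x = 0 <-> exists2 i, (i < n)%N & x = z i) /\
    z 0%N < 0 /\ 1 < z 1%N.
Proof.
rewrite oppr_gt0 ltrNl => /andP[beta_lt0 beta_gtN1] /andP[c_gt0 c_lt1].
case: n => [//|n] lt0n.
have [w [t [w_lt0 t_gt1 t_lt P_eq]]] := meixner_poly_neg_factor beta_gtN1 beta_lt0 c_gt0 c_lt1 n.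
pose z i := if i is j.+1 then t j else w.
have {}P_eq : meixner_poly beta c n.+1 = \prod_(i < n.+1) ('X - (z i)%:P).
  by rewrite big_ord_recl.
exists z; split; last split.
- move=> [|i] [|j] //= => [lt_jn|/t_lt//].
  exact: lt_trans w_lt0 (lt_trans ltr01 (t_gt1 j lt_jn)).
- move=> x; rewrite -(horner_meixner_poly_neg beta_gtN1 beta_lt0 c_gt0 c_lt1).
  by rewrite P_eq horner_prod_XsubC; apply: prod_sub_eq0.
- by split=> //; apply: t_gt1.
Qed.
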